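(* For any finite family of Boolean functions $f_1,\dots,f_k:\{0,1\}^n\times\{0,1\}^n\to\{0,1\}$, the garden-hose complexity satisfies \[ GH\Big(\bigoplus_{i=1}^k f_i\Big)\ \le\ 4\sum_{i=1}^k GH(f_i), \] where $\bigoplus_i f_i$ is the pointwise XOR.
   Context: Garden-hose model: Alice holds $x$, Bob holds $y$. There are $m$ pipes, each with one end on Alice's side and one on Bob's side. Depending only on $x$, Alice connects a water tap to one of her pipe ends and connects some disjoint pairs of her remaining pipe ends by hoses; depending only on $y$, Bob connects some disjoint pairs of his pipe ends by hoses. Water from the tap flows through the resulting path and spills out of an open pipe end, on Alice's or Bob's side. A protocol computes $f$ if the water spills on Alice's side when $f(x,y)=0$ and on Bob's side when $f(x,y)=1$. $GH(f)$ is the minimal number of pipes of a garden-hose protocol computing $f$. *)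

From mathcomp Require Import all_boot.
From Stdlib Require Import ClassicalEpsilon.
Set Implicit Arguments. Unset Strict Implicit. Unset Printing Implicit Defensive.

Definition bits (n : nat) := n.-tuple bool.

(* A hose configuration on one side: a partial matching of the pipe ends,
   given as a function sending a pipe end to the end it is joined to (if any). *)
Definition is_matching (m : nat) (M : 'I_m -> option 'I_m) : Prop :=
  forall i j : 'I_m, M i = Some j -> j != i /\ M j = Some i.

Record gh_protocol (n m : nat) := GHProtocol {
  gh_tap   : bits n -> 'I_m;                 (* pipe whose Alice-end gets the tap *)
  gh_alice : bits n -> 'I_m -> option 'I_m;
  gh_bob   : bits n -> 'I_m -> option 'I_m
}.

Definition gh_valid (n m : nat) (P : gh_protocol n m) : Prop :=
  (forall x, is_matching (gh_alice P x) /\ gh_alice P x (gh_tap P x) = None) /\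
  (forall y, is_matching (gh_bob P y)).

(* Water has just arrived at Bob's end of pipe p.  Result: true = spills on
   Bob's side, false = spills on Alice's side.  The water path never revisits a
   pipe, so m.+1 steps of fuel always suffice (the fuel-exhausted default is
   never reached). *)
Fixpoint gh_run (m fuel : nat) (A B : 'I_m -> option 'I_m) (p : 'I_m) : bool :=
  match fuel with
  | 0 => false
  | S f =>
      match B p with
      | None => true
      | Some q =>
          match A q with
          | None => false
          | Some r => gh_run f A B r
          end
      end
  end.

Definition gh_output (n m : nat) (P : gh_protocol n m) (x y : bits n) : bool :=
  gh_run m.+1 (gh_alice P x) (gh_bob P y) (gh_tap P x).

Definition gh_computes (n m : nat) (P : gh_protocol n m)
    (f : bits n -> bits n -> bool) : Prop :=
  gh_valid P /\ forall x y, gh_output P x y = f x y.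

Definition gh_computable (n : nat) (f : bits n -> bits n -> bool) (m : nat) : Prop :=
  exists P : gh_protocol n m, gh_computes P f.

(* GH(f): the least number of pipes of a protocol computing f
   (every f has a protocol; the default 0 is never used). *)
Definition gh_computableb (n : nat) (f : bits n -> bits n -> bool) (m : nat) : bool :=
  if excluded_middle_informative (gh_computable f m) then true else false.

Definition GH (n : nat) (f : bits n -> bits n -> bool) : nat :=
  match excluded_middle_informative (exists m, gh_computableb f m) with
  | left H => ex_minn H
  | right _ => 0
  end.

Definition xor_family (n k : nat) (F : 'I_k -> bits n -> bits n -> bool) :=
  fun x y : bits n => \big[addb/false]_(i < k) F i x y.

From mathcomp Require Import all_boot zify.
From Stdlib Require Import ClassicalEpsilon.
Set Implicit Arguments. Unset Strict Implicit. Unset Printing Implicit Defensive.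

(** Water in a hose network follows a walk through pipe ends that is
    deterministic, reversible and never comes back to the tap, so it spills
    after fewer than 2m steps.  Take several copies of a protocol for f and join
    their open pipe ends across copies, on Alice's side along one matching of
    the copies and on Bob's side along another: water entering copy c at the
    tap spills in c on the side given by f, crosses to a copy c', and retraces
    the reversed path back to the tap pipe of c', whose Alice end is open.
    Four copies give a gadget with two inputs and two outputs that crosses them
    exactly when f = 1; three copies give a one-input gadget that outputs f.
    Chaining the gadget for f_1 with those for f_2, ..., f_k and leading output
    1 to Bob's side through one extra pipe yields a protocol for the XOR with
    3 GH(f_1) + 4 (GH(f_2) + ... + GH(f_k)) + 1 <= 4 (GH(f_1) + ... + GH(f_k))
    pipes. *)

Section Matchings.
Variable T : finType.
Implicit Types (M : T -> option T) (p q u v : T).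

Definition matching M := forall p q, M p = Some q -> q != p /\ M q = Some p.

Lemma matching0 : matching (fun=> None).
Proof. by []. Qed.

Lemma involutive_matching (h : T -> T) :
  involutive h -> (forall p, h p != p) -> matching (Some \o h).
Proof. by move=> hK hP p q [<-]; rewrite hP /= hK. Qed.

Definition relink M u v p := if p == u then Some v else if p == v then Some u else M p.

Lemma relink_other M u v p : p != u -> p != v -> relink M u v p = M p.
Proof. by rewrite /relink => /negbTE-> /negbTE->. Qed.

Lemma relink_matching M u v :
  matching M -> M u = None -> M v = None -> u != v -> matching (relink M u v).
Proof.
move=> mM Mu Mv uv p q; rewrite /relink.
have [->|pu] := eqVneq p u; first by case=> <-; rewrite eq_sym (negbTE uv) eqxx.
have [->|pv] := eqVneq p v; first by case=> <-; rewrite (negbTE uv) eqxx.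
move=> /mM [qp Mq]; split=> //.
have qu : q != u by apply: contraPneq Mq => ->; rewrite Mu.
have qv : q != v by apply: contraPneq Mq => ->; rewrite Mv.
by rewrite (negbTE qu) (negbTE qv).
Qed.
End Matchings.

Definition hose_morph (T U : finType) (e : T -> U) (M : T -> option T) (N : U -> option U) :=
  forall p q, M p = Some q -> N (e p) = Some (e q).

Section SumHoses.
Variables (T1 T2 : finType) (M1 : T1 -> option T1) (M2 : T2 -> option T2).

Definition sum_hoses (p : T1 + T2) : option (T1 + T2) :=
  match p with inl p1 => omap inl (M1 p1) | inr p2 => omap inr (M2 p2) end.

Lemma sum_matching : matching M1 -> matching M2 -> matching sum_hoses.
Proof.
move=> m1 m2 [p|p] q /=.
- by case E: (M1 p) => [r|] //= [<-]; have [rp /= ->] := m1 _ _ E.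
- by case E: (M2 p) => [r|] //= [<-]; have [rp /= ->] := m2 _ _ E.
Qed.

Lemma sum_morph_inl : hose_morph inl M1 sum_hoses.
Proof. by move=> p q /= ->. Qed.

Lemma sum_morph_inr : hose_morph inr M2 sum_hoses.
Proof. by move=> p q /= ->. Qed.

End SumHoses.

(* [(p, true)] is Bob's end of pipe [p] and [(p, false)] is Alice's end. *)
Definition pipe_end (T : finType) := (T * bool)%type.
Definition other_end (T : finType) (d : pipe_end T) : pipe_end T := (d.1, ~~ d.2).

Lemma other_endK (T : finType) : involutive (@other_end T).
Proof. by case=> p s; rewrite /other_end negbK. Qed.

Section Walks.
Variables (T : finType) (A B : T -> option T).
Implicit Types (d e : pipe_end T).

Definition hose d : option (pipe_end T) :=
  omap (fun q => (q, d.2)) ((if d.2 then B else A) d.1).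
Definition step d := omap (@other_end T) (hose d).
Fixpoint walk k d := if k is k'.+1 then obind (walk k') (step d) else Some d.
Definition spills s e := exists k, walk k s = Some e /\ hose e = None.

Lemma walkD a b d : walk (a + b) d = obind (walk b) (walk a d).
Proof. by elim: a d => [|a IH] d //=; case: (step d). Qed.

Lemma walkSr k d : walk k.+1 d = obind step (walk k d).
Proof. by rewrite -addn1 walkD; case: (walk k d) => //= d'; case: (step d'). Qed.

Lemma walk_prefix i k d e : i <= k -> walk k d = Some e -> exists c, walk i d = Some c.
Proof. by move/subnKC <-; rewrite walkD; case: (walk i d) => // c; exists c. Qed.

Lemma stepE d d' : step d = Some d' -> hose d = Some (other_end d').
Proof. by rewrite /step; case: (hose d) => //= u [<-]; rewrite other_endK. Qed.

Lemma spills_unique s e e' : spills s e -> spills s e' -> e' = e.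
Proof.
have once k j e1 e2 : k <= j -> walk k s = Some e1 -> hose e1 = None ->
    walk j s = Some e2 -> e2 = e1.
  move/subnKC <-; rewrite walkD => -> He1 /=.
  by case: (j - k) => [[]|i] //=; rewrite /step He1.
move=> [k [Hk Hek]] [j [Hj Hej]].
have [kj|/ltnW jk] := leqP k j; first exact: once Hk Hek Hj.
by symmetry; apply: once Hj Hej Hk.
Qed.

Hypotheses (mA : matching A) (mB : matching B).

Lemma hose_sym d d' : hose d = Some d' -> hose d' = Some d /\ d' != d.
Proof.
case: d => p s; rewrite /hose /=.
have mM : matching (if s then B else A) by case: s.
case E: ((if s then B else A) p) => [q|] //= [<-] /=.
have [qp ->] := mM _ _ E.
by rewrite xpair_eqE (negbTE qp).
Qed.

Lemma step_inj d1 d2 d : step d1 = Some d -> step d2 = Some d -> d1 = d2.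
Proof.
by move=> /stepE /hose_sym [H1 _] /stepE /hose_sym [H2 _]; move: H1; rewrite H2 => -[].
Qed.

Lemma walk_rev k d e : walk k d = Some e -> walk k (other_end e) = Some (other_end d).
Proof.
elim: k d => [|k IH] d; first by case=> ->.
rewrite [walk k.+1 d]/=; case Ed: (step d) => [d'|] // /IH.
rewrite walkSr => -> /=.
by rewrite /step; have [-> _] := hose_sym (stepE Ed).
Qed.

(* A walk ending at [other_end s] would be a palindrome: its middle would be a
   pipe end equal to its own other end, or a hose joining an end to itself. *)
Lemma walk_no_return s k : walk k s <> Some (other_end s).
Proof.
move=> Hk.
have mirror i d : i <= k -> walk i s = Some d -> walk (k - i) s = Some (other_end d).
  move=> ik Hi; move: Hk; rewrite -(subnKC ik) walkD Hi /= => /walk_rev.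
  by rewrite other_endK addKn.
have halves := odd_double_half k; rewrite -addnn in halves.
have half_le : k./2 <= k by lia.
have [d Hd] := walk_prefix half_le Hk.
have := mirror _ _ half_le Hd.
have -> : k - k./2 = k./2 + odd k by lia.
case: (odd k); rewrite ?addn1 ?addn0.
- by rewrite walkSr Hd /= => /stepE; rewrite other_endK => /hose_sym [_]; rewrite eqxx.
- by rewrite Hd; case: d {Hd} => p [] [].
Qed.

Lemma walk_inj s i j e : hose (other_end s) = None ->
  walk i s = Some e -> walk j s = Some e -> i = j.
Proof.
move=> src.
have never_back k : walk k.+1 s <> Some s.
  rewrite walkSr; case: (walk k s) => //= c /stepE /hose_sym [].
  by rewrite src.
elim: i j e => [|i IH] [|j] e //.
- by move=> [<-] /never_back.
- by move=> + [Es]; rewrite -Es => /never_back.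
rewrite !walkSr; case Ei: (walk i s) => [c|] //= Hc; case Ej: (walk j s) => [c'|] //= Hc'.
by rewrite (IH j c) // (step_inj Hc Hc').
Qed.

Lemma walk_stops s : hose (other_end s) = None ->
  exists2 k, k <= 2 * #|T| & walk k s = None.
Proof.
move=> src; set N := 2 * #|T|.
have [/existsP [i /eqP Hi]|] := boolP [exists i : 'I_N.+1, walk i s == None].
  by exists i; rewrite // -ltnS.
rewrite negb_exists => /forallP defined.
pose w (i : 'I_N.+1) := odflt s (walk i s).
have wE (i : 'I_N.+1) : walk i s = Some (w i).
  by rewrite /w; move: (defined i); case: (walk i s).
have w_inj : injective w.
  by move=> i j wij; apply/val_inj/(walk_inj src (wE i)); rewrite wij wE.
have := leq_card w w_inj.
by rewrite card_ord card_prod card_bool mulnC ltnn.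
Qed.

Lemma walk_spills t : A t = None ->
  exists k e, k < 2 * #|T| /\ walk k (t, true) = Some e /\ hose e = None.
Proof.
move=> At; have src : hose (other_end (t, true)) = None by rewrite /hose /= At.
have [k kN Hk] := walk_stops src.
have ex : exists k, walk k (t, true) == None by exists k; apply/eqP.
case: (ex_minnP ex) => [[|j] /eqP Hj jmin] //.
have jk : j < k by apply: jmin; apply/eqP.
case Ej: (walk j (t, true)) => [e|]; last by have := jmin j; rewrite Ej eqxx ltnn => /(_ isT).
exists j, e; split; first exact: leq_trans jk kN.
by move: Hj; rewrite walkSr Ej /= /step; case: (hose e).
Qed.

End Walks.

Definition map_end (T U : finType) (e : T -> U) (d : pipe_end T) : pipe_end U :=
  (e d.1, d.2).

Lemma walk_map (T U : finType) (e : T -> U) A B A' B' k d d' :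
  walk A B k d = Some d' -> hose_morph e A A' -> hose_morph e B B' ->
  walk A' B' k (map_end e d) = Some (map_end e d').
Proof.
move=> + eA eB; elim: k d => [|k IH] d /=; first by case=> <-.
rewrite /step /hose; case: d => p [] /=.
- by case E: (B p) => [q|] //= /IH; rewrite (eB _ _ E).
- by case E: (A p) => [q|] //= /IH; rewrite (eA _ _ E).
Qed.

Lemma gh_run_walk m (A B : 'I_m -> option 'I_m) fuel k p e :
  walk A B k (p, true) = Some e -> hose A B e = None -> k < 2 * fuel ->
  gh_run fuel A B p = e.2.
Proof.
elim: fuel k p => [|f IH] [|[|k]] p //=; rewrite ?muln0 //.
- by case=> <-; rewrite /hose /=; case: (B p).
- rewrite /step /hose /=; case: (B p) => [q|] //= [<-].
  by rewrite /hose /=; case: (A q).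
rewrite /step /hose /=; case: (B p) => [q|] //=.
rewrite /step /hose /=; case: (A q) => [r|] //= Hk He kf.
apply: IH Hk He _; lia.
Qed.

Section Relabel.
Variables (T U : finType) (e : T -> U) (e' : U -> T).
Hypotheses (eK : cancel e e') (e'K : cancel e' e).

Definition relabel (M : T -> option T) (u : U) : option U := omap e (M (e' u)).

Lemma relabelE M p : relabel M (e p) = omap e (M p).
Proof. by rewrite /relabel eK. Qed.

Lemma relabel_matching M : matching M -> matching (relabel M).
Proof.
move=> mM u v; rewrite /relabel; case E: (M (e' u)) => [p|] //= [<-].
have [pu Mp] := mM _ _ E; rewrite eK Mp /= e'K; split=> //.
by apply: contraNneq pu => <-; rewrite eK.
Qed.

Lemma relabel_morph M : hose_morph e M (relabel M).
Proof. by move=> p q E; rewrite relabelE E. Qed.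

End Relabel.

Section Protocols.
Variable n : nat.
Implicit Type f : bits n -> bits n -> bool.

(* Water from the tap first runs through pipe [tap x], so its walk starts at
   Bob's end of that pipe. *)
Record computes (T : finType) (tap : bits n -> T) (A B : bits n -> T -> option T) f :
    Prop := Computes {
  alice_matching : forall x, matching (A x);
  tap_free : forall x, A x (tap x) = None;
  bob_matching : forall y, matching (B y);
  computes_spills : forall x y, exists2 e, spills (A x) (B y) (tap x, true) e & e.2 = f x y }.

Lemma gh_computesP m (P : gh_protocol n m) f :
  gh_computes P f <-> computes (gh_tap P) (gh_alice P) (gh_bob P) f.
Proof.
have bound k : k < 2 * #|'I_m| -> k < 2 * m.+1 by rewrite card_ord; lia.
split=> [[[HA HB] out]|[HA At HB spill]].
- split=> [x|x|y|x y]; [exact: (HA x).1 | exact: (HA x).2 | exact: HB |].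
  have [mA At] := HA x.
  have [k [e [kN [Hk He]]]] := walk_spills mA (HB y) At.
  exists e; first by exists k.
  by rewrite -out /gh_output (gh_run_walk Hk He (bound k kN)).
- split=> [|x y]; first by split=> [x|]; [split; [exact: HA | exact: At] | exact: HB].
  have [k [e [kN [Hk He]]]] := walk_spills (HA x) (HB y) (At x).
  have [e' [j [Hj He']] <-] := spill x y.
  rewrite (spills_unique (ex_intro _ k (conj Hk He)) (ex_intro _ j (conj Hj He'))).
  exact: gh_run_walk Hk He (bound k kN).
Qed.

Lemma computes_relabel (T U : finType) (e : T -> U) (e' : U -> T) tap A B f :
  cancel e e' -> cancel e' e -> computes tap A B f ->
  computes (e \o tap) (fun x => relabel e e' (A x)) (fun y => relabel e e' (B y)) f.
Proof.
move=> eK e'K [HA At HB spill]; split=> [x|x|y|x y].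
- exact: relabel_matching.
- by rewrite /= relabelE // At.
- exact: relabel_matching.
have [d [k [Hk Hd]] <-] := spill x y.
exists (map_end e d) => //; exists k; split.
  exact: walk_map Hk (relabel_morph (M := A x) eK) (relabel_morph (M := B y) eK).
by move: Hd; case: d {Hk} => p [] /=; rewrite /hose /= relabelE //; case: (_ p).
Qed.

Lemma computes_gh_computable (T : finType) tap (A B : bits n -> T -> option T) f :
  computes tap A B f -> gh_computable f #|T|.
Proof.
move=> /(computes_relabel (@enum_rankK T) (@enum_valK T)) HP.
by exists (GHProtocol (enum_rank \o tap) (fun x => relabel enum_rank enum_val (A x))
                         (fun y => relabel enum_rank enum_val (B y))); apply/gh_computesP.
Qed.

(* Water from pipe [(false, x)] spills at its Bob end if [f x y], and otherwise
   crosses to pipe [(true, x)] and spills on Alice's side. *)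
Definition table_bob f (y : bits n) (p : bool * bits n) : option (bool * bits n) :=
  if f p.2 y then None else Some (~~ p.1, p.2).

Lemma computes_table f : computes (fun x => (false, x)) (fun _ _ => None) (table_bob f) f.
Proof.
split=> [x|x|y|x y] //.
  move=> [c p] q; rewrite /table_bob /=; case E: (f p y) => //= -[<-] /=.
  by rewrite negbK E xpair_eqE; case: c.
case E: (f x y); [exists (false, x, true) | exists (true, x, false)] => //.
  by exists 0; rewrite /hose /= /table_bob /= E.
by exists 1; rewrite /= /step /hose /= /table_bob /= E.
Qed.

Lemma gh_computableP f m : reflect (gh_computable f m) (gh_computableb f m).
Proof. by rewrite /gh_computableb; case: excluded_middle_informative; constructor. Qed.

Lemma GH_computable f : gh_computable f (GH f).
Proof.
rewrite /GH; case: excluded_middle_informative => [ex|[]].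
  by case: (ex_minnP ex) => m /gh_computableP.
exists #|{: bool * bits n}|; apply/gh_computableP.
exact: computes_gh_computable (computes_table f).
Qed.

Lemma GH_min f m : gh_computable f m -> GH f <= m.
Proof.
rewrite /GH => /gh_computableP fm; case: excluded_middle_informative => [ex|[]].
  by case: (ex_minnP ex) => k _; apply.
by exists m.
Qed.

Lemma GH_protocol f :
  exists P : gh_protocol n (GH f), computes (gh_tap P) (gh_alice P) (gh_bob P) f.
Proof. by have [P /gh_computesP HP] := GH_computable f; exists P. Qed.

Lemma GH_gt0 f : 0 < GH f.
Proof.
have [P _] := GH_computable f.
by case: (GH f) P => // P; case: (gh_tap P [tuple of nseq n false]).
Qed.

End Protocols.

Section Copies.
Variables (T C : finType) (M : T -> option T) (L : C -> option C) (free : pred T).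

Definition copies (cp : C * T) : option (C * T) :=
  if M cp.2 is Some q then Some (cp.1, q)
  else if free cp.2 then omap (fun c => (c, cp.2)) (L cp.1) else None.

Lemma copies_matching : matching M -> matching L -> matching copies.
Proof.
move=> mM mL [c p] [c' q]; rewrite /copies /=.
case E: (M p) => [r|].
  by case=> <- <-; have [rp ->] := mM _ _ E; rewrite xpair_eqE (negbTE rp) andbF.
case: ifP => // fp; case El: (L c) => [d|] //= [<- <-].
by have [dc ->] := mL _ _ El; rewrite E fp xpair_eqE (negbTE dc).
Qed.

Lemma copies_morph c : hose_morph (pair c) M copies.
Proof. by move=> p q E; rewrite /copies /= E. Qed.

End Copies.

Section CopyWalk.
Variables (T C : finType) (A B : T -> option T) (t : T) (LA LB : C -> option C).
Hypotheses (mA : matching A) (mB : matching B) (At : A t = None).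

Let A' := copies A LA (predC1 t).
Let B' := copies B LB predT.

(* Water runs through copy [c0] to its spill point, crosses to copy [c1] there,
   and retraces the reversed path back to the tap pipe of [c1]. *)
Lemma copies_spills e c0 c1 : spills A B (t, true) e ->
  (if e.2 then LB else LA) c0 = Some c1 -> spills A' B' ((c0, t), true) ((c1, t), false).
Proof.
move=> [k [Hk He]] link.
have morph c : hose_morph (pair c) A A' /\ hose_morph (pair c) B B'.
  by split; apply: copies_morph.
have there := walk_map Hk (morph c0).1 (morph c0).2.
have back := walk_map (walk_rev mA mB Hk) (morph c1).1 (morph c1).2.
have not_tap : e != (t, false).
  by apply/eqP => eE; apply: (walk_no_return mA mB (s := (t, true)) (k := k)); rewrite Hk eE.
have cross : step A' B' (map_end (pair c0) e) = Some (map_end (pair c1) (other_end e)).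
  move: He link not_tap; case: e {Hk there back} => p [] /=;
    rewrite /step /hose /A' /B' /copies /=.
  - by case: (B p) => //= _ ->.
  - by case: (A p) => //= _ ->; rewrite xpair_eqE eqxx andbT => ->.
exists (k + k.+1); split; last by rewrite /hose /A' /copies /= At eqxx.
by rewrite walkD there /= cross /=.
Qed.

End CopyWalk.

Record gadget (n : nat) (T : finType) := Gadget {
  gin : bool -> bits n -> T;
  gout : bool -> bits n -> T;
  galice : bits n -> T -> option T;
  gbob : bits n -> T -> option T }.

(* Water entering input [b] (arriving at Bob's end of pipe [gin b x]) spills at
   Alice's end of output [b (+) g x y]; a one-input gadget ([two_inputs = false])
   only guarantees this for [b = false]. *)
Record gadget_ok n (T : finType) (G : gadget n T) (g : bits n -> bits n -> bool)
    (two_inputs : bool) : Prop := GadgetOk {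
  galice_matching : forall x, matching (galice G x);
  gbob_matching : forall y, matching (gbob G y);
  gin_free : forall x b, galice G x (gin G b x) = None;
  gout_free : forall x b, galice G x (gout G b x) = None;
  gin_neq_gout : forall x b b', gin G b x != gout G b' x;
  gout_neq : forall x, gout G false x != gout G true x;
  gin_neq : two_inputs -> forall x, gin G false x != gin G true x;
  gadget_spills : forall x y b, b ==> two_inputs ->
    spills (galice G x) (gbob G y) (gin G b x, true) (gout G (b (+) g x y) x, false) }.

Lemma gadget_ok_ext n (T : finType) (G : gadget n T) g g' two :
  (forall x y, g x y = g' x y) -> gadget_ok G g two -> gadget_ok G g' two.
Proof. by move=> gg' [*]; split=> // x y; rewrite -gg'; auto. Qed.

Section CopyGadgets.
Variables (n : nat) (T C : finType) (tap : bits n -> T) (A B : bits n -> T -> option T).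
Variables (LA LB : C -> option C) (cin cout : bool -> C).

Definition copy_gadget : gadget n (C * T)%type :=
  Gadget (fun b x => (cin b, tap x)) (fun b x => (cout b, tap x))
         (fun x => copies (A x) LA (predC1 (tap x))) (fun y => copies (B y) LB predT).

Lemma copy_gadget_ok f (two : bool) : computes tap A B f -> matching LA -> matching LB ->
  (forall b b', cin b != cout b') -> cout false != cout true ->
  (two -> cin false != cin true) ->
  (forall b v, b ==> two -> (if v then LB else LA) (cin b) = Some (cout (b (+) v))) ->
  gadget_ok copy_gadget f two.
Proof.
move=> [HA At HB spill] mLA mLB in_out outs ins link.
have closed x c : copies (A x) LA (predC1 (tap x)) (c, tap x) = None.
  by rewrite /copies /= At eqxx.
split=> [x|y|x b|x b|x b b'|x|/ins ins' x|x y b /link linkb].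
- exact: copies_matching.
- exact: copies_matching.
- exact: closed.
- exact: closed.
- by rewrite xpair_eqE negb_and in_out.
- by rewrite xpair_eqE negb_and outs.
- by rewrite xpair_eqE negb_and ins'.
have [e Se ef] := spill x y.
by apply: (copies_spills (HA x) (HB y) (At x) Se); rewrite ef linkb.
Qed.

End CopyGadgets.

Section ReadFlip.
Variables (n : nat) (T : finType) (tap : bits n -> T) (A B : bits n -> T -> option T).
Variable f : bits n -> bits n -> bool.
Hypothesis Hf : computes tap A B f.

Definition read_gadget :=
  copy_gadget tap A B (relink (fun=> None) None (Some false))
    (relink (fun=> None) None (Some true)) (fun=> None) Some.

Lemma read_gadget_ok : gadget_ok read_gadget f false.
Proof.
apply: copy_gadget_ok => //; try exact: relink_matching.
by move=> [] // [].
Qed.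

(* Input [b] is copy [(false, b)] and output [b] is copy [(true, b)]; a spill on
   Bob's side, i.e. [f x y], crosses over to output [~~ b]. *)
Definition flip_gadget :=
  copy_gadget tap A B (Some \o fun c => (~~ c.1, c.2)) (Some \o fun c => (~~ c.1, ~~ c.2))
    (pair false) (pair true).

Lemma flip_gadget_ok : gadget_ok flip_gadget f true.
Proof.
apply: copy_gadget_ok => //; try by apply: involutive_matching => -[[] []].
by move=> [] [].
Qed.

End ReadFlip.

Section Composition.
Variables (n : nat) (T1 T2 : finType) (G1 : gadget n T1) (G2 : gadget n T2).

Definition comp_alice x : T1 + T2 -> option (T1 + T2) :=
  relink (relink (sum_hoses (galice G1 x) (galice G2 x))
                 (inl (gout G1 false x)) (inr (gin G2 false x)))
         (inl (gout G1 true x)) (inr (gin G2 true x)).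

Definition comp_gadget : gadget n (T1 + T2)%type :=
  Gadget (fun b x => inl (gin G1 b x)) (fun b x => inr (gout G2 b x))
         comp_alice (fun y => sum_hoses (gbob G1 y) (gbob G2 y)).

Lemma comp_alice_inl x p : p != gout G1 false x -> p != gout G1 true x ->
  comp_alice x (inl p) = omap inl (galice G1 x p).
Proof. by move=> p0 p1; rewrite /comp_alice !relink_other. Qed.

Lemma comp_alice_inr x p : p != gin G2 false x -> p != gin G2 true x ->
  comp_alice x (inr p) = omap inr (galice G2 x p).
Proof. by move=> p0 p1; rewrite /comp_alice !relink_other. Qed.

Variables (g h : bits n -> bits n -> bool) (two : bool).
Hypotheses (H1 : gadget_ok G1 g two) (H2 : gadget_ok G2 h true).

Lemma comp_alice_link x b : comp_alice x (inl (gout G1 b x)) = Some (inr (gin G2 b x)).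
Proof.
rewrite /comp_alice /relink; case: b; rewrite ?eqxx //.
by rewrite (inj_eq inl_inj) (negbTE (gout_neq H1 x)).
Qed.

Lemma comp_walk_inl x y k d d' : walk (galice G1 x) (gbob G1 y) k d = Some d' ->
  walk (comp_alice x) (gbob comp_gadget y) k (map_end inl d) = Some (map_end inl d').
Proof.
move/walk_map; apply=> [p q E|]; last exact: sum_morph_inl.
by rewrite comp_alice_inl ?E //; apply: contraPneq E => ->; rewrite (gout_free H1).
Qed.

Lemma comp_walk_inr x y k d d' : walk (galice G2 x) (gbob G2 y) k d = Some d' ->
  walk (comp_alice x) (gbob comp_gadget y) k (map_end inr d) = Some (map_end inr d').
Proof.
move/walk_map; apply=> [p q E|]; last exact: sum_morph_inr.
by rewrite comp_alice_inr ?E //; apply: contraPneq E => ->; rewrite (gin_free H2).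
Qed.

Lemma comp_alice_matching x : matching (comp_alice x).
Proof.
apply: relink_matching; first apply: relink_matching => //.
- exact: sum_matching (galice_matching (x := x) H1) (galice_matching (x := x) H2).
- by rewrite /= (gout_free H1).
- by rewrite /= (gin_free H2).
- by rewrite relink_other /= ?(gout_free H1) // (inj_eq inl_inj) eq_sym (gout_neq H1).
- by rewrite relink_other /= ?(gin_free H2) // (inj_eq inr_inj) eq_sym (gin_neq H2).
- by [].
Qed.

Lemma comp_gadget_ok : gadget_ok comp_gadget (fun x y => g x y (+) h x y) two.
Proof.
split=> [x|y|x b|x b|//|x|/(gin_neq H1) ins x|x y b two_b] /=.
- exact: comp_alice_matching.
- exact: sum_matching (gbob_matching (y := y) H1) (gbob_matching (y := y) H2).
- by rewrite comp_alice_inl ?(gin_free H1) ?(gin_neq_gout H1).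
- by rewrite comp_alice_inr ?(gout_free H2) // eq_sym (gin_neq_gout H2).
- by rewrite (inj_eq inr_inj) (gout_neq H2).
- by rewrite (inj_eq inl_inj) ins.
have [k1 [W1 _]] := gadget_spills H1 x y two_b.
have [k2 [W2 E2]] := gadget_spills H2 x y (implybT (b (+) g x y)).
exists (k1 + k2.+1); split.
- rewrite walkD (comp_walk_inl W1) /= /step /hose /= comp_alice_link /= addbA.
  exact: comp_walk_inr W2.
- by rewrite /hose /= comp_alice_inr ?(gout_free H2) // eq_sym (gin_neq_gout H2).
Qed.

End Composition.

Section Closing.
Variables (n : nat) (T : finType) (G : gadget n T) (g : bits n -> bits n -> bool).
Hypothesis HG : gadget_ok G g false.

(* One extra pipe carries output [true] over to Bob's side, where it is left open. *)
Definition close_alice x : T + unit -> option (T + unit) :=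
  relink (sum_hoses (galice G x) (fun=> None)) (inl (gout G true x)) (inr tt).
Definition close_bob y : T + unit -> option (T + unit) :=
  sum_hoses (gbob G y) (fun=> None).

Lemma close_computes : computes (fun x => inl (gin G false x)) close_alice close_bob g.
Proof.
have alice_inl x p : p != gout G true x -> close_alice x (inl p) = omap inl (galice G x p).
  by move=> p1; rewrite /close_alice relink_other.
split=> [x|x|y|x y].
- apply: relink_matching => //; last by rewrite /= (gout_free HG).
  by apply: sum_matching; [exact: (galice_matching (x := x) HG) | exact: matching0].
- by rewrite alice_inl ?(gin_neq_gout HG) ?(gin_free HG).
- by apply: sum_matching; [exact: (gbob_matching (y := y) HG) | exact: matching0].
have [k [Hk _]] := gadget_spills HG x y (implyFb false).
have {}Hk : walk (close_alice x) (close_bob y) k (inl (gin G false x), true) =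
    Some (inl (gout G (g x y) x), false).
  apply: (walk_map Hk) => [p q E|]; last exact: sum_morph_inl.
  by rewrite alice_inl ?E //; apply: contraPneq E => ->; rewrite (gout_free HG).
case gxy: (g x y) Hk => Hk.
- exists (inr tt, true) => //; exists k.+1.
  by rewrite walkSr Hk /= /step /hose /= /close_alice /relink eqxx.
- exists (inl (gout G false x), false) => //; exists k; split=> //.
  by rewrite /hose /= alice_inl ?(gout_free HG) ?(gout_neq HG).
Qed.

End Closing.

Lemma xor_gadget n k (F : 'I_k.+1 -> bits n -> bits n -> bool) :
  exists (T : finType) (G : gadget n T),
    gadget_ok G (xor_family F) false /\ #|T| < 4 * \sum_(i < k.+1) GH (F i).
Proof.
elim: k F => [|k IH] F.
- have [P HP] := GH_protocol (F ord0).
  exists _, (read_gadget (gh_tap P) (gh_alice P) (gh_bob P)); split.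
    by apply: gadget_ok_ext (read_gadget_ok HP) => x y; rewrite /xor_family big_ord1.
  rewrite big_ord1 card_prod card_option card_bool card_ord.
  by have := GH_gt0 (F ord0); lia.
have [T [G [HG size_G]]] := IH (fun i => F (widen_ord (leqnSn k.+1) i)).
have [P HP] := GH_protocol (F ord_max).
exists _, (comp_gadget G (flip_gadget (gh_tap P) (gh_alice P) (gh_bob P))); split.
  apply: gadget_ok_ext (comp_gadget_ok HG (flip_gadget_ok HP)) => x y.
  by rewrite /xor_family [in RHS]big_ord_recr.
rewrite big_ord_recr /= card_sum !card_prod !card_bool card_ord.
by move: size_G; set S := \sum_(i < k.+1) _; lia.
Qed.

Theorem mainTheorem12 (n k : nat) (F : 'I_k -> bits n -> bits n -> bool) :
  0 < k ->
  GH (xor_family F) <= 4 * \sum_(i < k) GH (F i).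
Proof.
case: k F => // k F _.
have [T [G [HG size_G]]] := xor_gadget F.
have computable := computes_gh_computable (close_computes HG).
apply: leq_trans (GH_min computable) _.
by rewrite card_sum card_unit addn1.
Qed.
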